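(* Let $A,B\in\mathbb{P}_d$ and let $X\in\mathbb{C}^{d\times k}$ have full column rank. Then for every $t\in[0,1]$, $$\operatorname{tr} X^*(A\#_tB)X\le[\operatorname{tr}X^*AX]^{1-t}[\operatorname{tr}X^*BX]^{t}.$$
   Context: $\mathbb{P}_d$ denotes the set of $d\times d$ Hermitian positive definite matrices, and $A\#_tB:=A^{1/2}(A^{-1/2}BA^{-1/2})^tA^{1/2}$ for $A,B\in\mathbb{P}_d$, $t\in[0,1]$. *)

From HB Require Import structures.
From mathcomp Require Import all_boot all_order all_algebra.
From mathcomp Require Import sesquilinear spectral.
From mathcomp Require Import complex.
From mathcomp Require Import reals exp.

Set Implicit Arguments.
Unset Strict Implicit.
Unset Printing Implicit Defensive.

Import Order.TTheory GRing.Theory Num.Theory.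
Local Open Scope ring_scope.
Local Open Scope sesquilinear_scope.
Local Open Scope complex_scope.

Section Defs.
Context {R : realType}.
Local Notation C := (R[i]).

Definition adjmx m n (X : 'M[C]_(m, n)) : 'M[C]_(n, m) := X ^t*.

(* Hermitian positive definite d x d matrices (the set P_d):
   A = A^* and x^* A x > 0 for every nonzero x (here x = v^*, v a row vector). *)
Definition posdef d (A : 'M[C]_d) : Prop :=
  A \is hermsymmx /\
  forall v : 'rV[C]_d, v != 0 -> 0 < (v *m A *m adjmx v) 0 0.

(* Real power A^t of a Hermitian positive definite matrix, via the spectral
   decomposition A = P^-1 diag(lambda) P (P unitary) provided by spectral.v:
   A^t := P^-1 diag(lambda_i^t) P.  (Only meaningful for A positive definite.) *)
Definition mxpow d (A : 'M[C]_d) (t : R) : 'M[C]_d :=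
  invmx (spectralmx A)
  *m diag_mx (\row_i ((powR (complex.Re (spectral_diag A 0 i)) t)%:C))
  *m spectralmx A.

Definition geomean d (A B : 'M[C]_d) (t : R) : 'M[C]_d :=
  mxpow A (1/2) *m mxpow (mxpow A (-(1/2)) *m B *m mxpow A (-(1/2))) t
  *m mxpow A (1/2).

End Defs.

From HB Require Import structures.
From mathcomp Require Import all_boot all_order all_algebra.
From mathcomp Require Import sesquilinear spectral.
From mathcomp Require Import complex.
From mathcomp Require Import reals exp.

(** Put [G = A^(1/2)] and diagonalise [C = A^(-1/2) B A^(-1/2) = Q^* diag(l) Q].
    With [Y = G X] and [w_i] the squared norm of the [i]-th row of [Q Y], the
    traces of [X^* (A #_t B) X], [X^* A X] and [X^* B X] are [sum_i l_i^t w_i],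
    [sum_i w_i] and [sum_i l_i w_i], so the claim is Hölder's inequality for the
    weights [w]; after normalising both sums it reduces to the weighted AM-GM
    inequality [a^(1-t) b^t <= (1-t) a + t b]. *)

Set Implicit Arguments.
Unset Strict Implicit.
Unset Printing Implicit Defensive.

Import Order.TTheory GRing.Theory Num.Theory.
Local Open Scope ring_scope.
Local Open Scope complex_scope.

Section WeightedHolder.
Variable R : realType.

Lemma young_powR (a b t : R) : 0 <= a -> 0 <= b -> 0 < t < 1 ->
  powR a (1 - t) * powR b t <= (1 - t) * a + t * b.
Proof.
move=> a0 b0 /andP[t0 t1].
have t1' : 0 < 1 - t by rewrite subr_gt0.
have := @conjugate_powR R (powR a (1 - t)) (powR b t) (1 - t)^-1 t^-1
  (powR_ge0 _ _) (powR_ge0 _ _) (ltac:(by rewrite invr_gt0))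
  (ltac:(by rewrite invr_gt0)).
rewrite !invrK subrK => /(_ erefl).
rewrite -!powRrM !mulfV ?lt0r_neq0 // !powRr1 //.
by rewrite [_ * (1 - t)]mulrC [_ * t]mulrC.
Qed.

Lemma powR_mulr_split (l w t : R) : 0 <= l -> 0 <= w -> 0 < t < 1 ->
  powR l t * w = powR w (1 - t) * powR (l * w) t.
Proof.
move=> l0 w0 /andP[t0 t1].
have [->|wn0] := eqVneq w 0.
  by rewrite mulr0 powR0 ?mul0r // subr_eq0 eq_sym lt_eqF.
rewrite powRM // mulrCA -powRD; last by apply/implyP.
by rewrite subrK powRr1.
Qed.

Lemma sum_powR_holder_interior n (l w : 'I_n -> R) (t : R) :
  0 < t < 1 -> (forall i, 0 <= l i) -> (forall i, 0 <= w i) ->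
  0 < \sum_i w i -> 0 < \sum_i l i * w i ->
  \sum_i powR (l i) t * w i <=
  powR (\sum_i w i) (1 - t) * powR (\sum_i l i * w i) t.
Proof.
move=> t01 l0 w0.
set S := \sum_i w i; set T := \sum_i l i * w i => S0 T0.
set K := powR S (1 - t) * powR T t.
(* Young's inequality for the normalised weights [w_i / S] and [l_i w_i / T]. *)
apply: (@le_trans _ _ (\sum_i K * ((1 - t) * (w i / S) + t * (l i * w i / T)))).
  apply: ler_sum => i _; rewrite powR_mulr_split //.
  have wE : w i = S * (w i / S) by rewrite [S * _]mulrC divfK ?lt0r_neq0.
  have lwE : l i * w i = T * (l i * w i / T) by rewrite [T * _]mulrC divfK ?lt0r_neq0.
  have wS0 : 0 <= w i / S by rewrite divr_ge0 ?w0 ?ltW.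
  have lwT0 : 0 <= l i * w i / T by rewrite divr_ge0 ?mulr_ge0 ?l0 ?w0 ?ltW.
  rewrite {1}wE {1}lwE (powRM _ (ltW S0) wS0) (powRM _ (ltW T0) lwT0) mulrACA.
  by rewrite -/K ler_wpM2l ?mulr_ge0 ?powR_ge0 ?young_powR.
rewrite -big_distrr /= big_split /= -!big_distrr /= -!mulr_suml.
by rewrite !divff ?lt0r_neq0 // !mulr1 subrK mulr1.
Qed.

Lemma sum_powR_holder n (l w : 'I_n -> R) (t : R) : 0 <= t <= 1 ->
  (forall i, 0 <= l i) -> (forall i, 0 <= w i) ->
  \sum_i powR (l i) t * w i <=
  powR (\sum_i w i) (1 - t) * powR (\sum_i l i * w i) t.
Proof.
move=> /andP[t0 t1] l0 w0.
have lw0 i : 0 <= l i * w i by rewrite mulr_ge0.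
have [->|tn0] := eqVneq t 0.
  rewrite subr0 powRr1 ?sumr_ge0 // powRr0 mulr1.
  by apply: ler_sum => i _; rewrite powRr0 mul1r.
have [->|tn1] := eqVneq t 1.
  rewrite subrr powRr0 mul1r powRr1 ?sumr_ge0 //.
  by apply: ler_sum => i _; rewrite powRr1.
have [|S0] := eqVneq (\sum_i w i) 0.
  move/eqP; rewrite psumr_eq0 // => /allP w_eq0.
  rewrite big1 ?mulr_ge0 ?powR_ge0 // => i _.
  by have /eqP -> := w_eq0 i (mem_index_enum i); rewrite mulr0.
have [|T0] := eqVneq (\sum_i l i * w i) 0.
  move/eqP; rewrite psumr_eq0 // => /allP lw_eq0.
  rewrite big1 ?mulr_ge0 ?powR_ge0 // => i _.
  have /eqP/eqP := lw_eq0 i (mem_index_enum i).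
  by rewrite mulf_eq0 => /orP[/eqP->|/eqP->]; rewrite ?powR0 ?mul0r ?mulr0.
apply: sum_powR_holder_interior => //.
- by rewrite !lt_neqAle eq_sym tn0 t0 tn1 t1.
- by rewrite lt_neqAle eq_sym S0 sumr_ge0.
- by rewrite lt_neqAle eq_sym T0 sumr_ge0.
Qed.

End WeightedHolder.

Section Matrices.
Local Open Scope sesquilinear_scope.
Variable R : realType.
Local Notation C := (R[i]).

Lemma ge0_RRe (z : C) : 0 <= z -> z = (complex.Re z)%:C.
Proof. by move=> z0; rewrite RRe_real // ger0_real. Qed.

Lemma trmxC_mul m n p (A : 'M[C]_(m, n)) (B : 'M[C]_(n, p)) :
  (A *m B) ^t* = B ^t* *m A ^t*.
Proof. by rewrite trmx_mul map_mxM. Qed.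

Lemma hermitian_trmxC n (M : 'M[C]_n) : M \is hermsymmx -> M ^t* = M.
Proof. by move=> /is_hermitianmxP {2}->; rewrite expr0 scale1r. Qed.

Lemma hermitian_congr m n (M : 'M[C]_n) (N : 'M[C]_(m, n)) :
  M \is hermsymmx -> N *m M *m N ^t* \is hermsymmx.
Proof.
move=> hM; apply/is_hermitianmxP; rewrite expr0 scale1r.
by rewrite !trmxC_mul trmxCK hermitian_trmxC // mulmxA.
Qed.

Lemma mxtrace_diag_congr n k (Z : 'M[C]_(n, k)) (g : 'rV[C]_n) :
  \tr (Z ^t* *m diag_mx g *m Z) = \sum_i g 0 i * \sum_j `|Z i j| ^+ 2.
Proof.
rewrite /mxtrace.
under eq_bigr => j _ do rewrite mxE.
under eq_bigr => j _ do under eq_bigr => i _ do rewrite mul_mx_diag !mxE.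
rewrite exchange_big /=; apply: eq_bigr => i _.
rewrite big_distrr /=; apply: eq_bigr => j _.
by rewrite normCKC mulrAC mulrC.
Qed.

Lemma diag_form n (v g : 'rV[C]_n) :
  (v *m diag_mx g *m v ^t*) 0 0 = \sum_i g 0 i * `|v 0 i| ^+ 2.
Proof.
rewrite -trace_mx11 -{1}[v]trmxCK mxtrace_diag_congr; apply: eq_bigr => i _.
by rewrite big_ord1 !mxE norm_conjC.
Qed.

Lemma posdef_congr_ge0 m n (B : 'M[C]_n) (N : 'M[C]_(m, n)) (v : 'rV[C]_m) :
  posdef B -> 0 <= (v *m (N *m B *m N ^t*) *m v ^t*) 0 0.
Proof.
move=> [_ B0].
have -> : v *m (N *m B *m N ^t*) *m v ^t* = (v *m N) *m B *m (v *m N) ^t*.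
  by rewrite trmxC_mul !mulmxA.
have [->|vN0] := eqVneq (v *m N) 0; first by rewrite !mul0mx mxE.
exact/ltW/B0.
Qed.

Definition row_sqnorm n k (Y : 'M[C]_(n, k)) (i : 'I_n) : R :=
  complex.Re (\sum_j `|Y i j| ^+ 2).

Lemma row_sqnormE n k (Y : 'M[C]_(n, k)) i :
  \sum_j `|Y i j| ^+ 2 = (row_sqnorm Y i)%:C.
Proof. by rewrite -ge0_RRe // sumr_ge0 // => j _; rewrite exprn_ge0. Qed.

Lemma row_sqnorm_ge0 n k (Y : 'M[C]_(n, k)) i : 0 <= row_sqnorm Y i.
Proof. by rewrite -lecR -row_sqnormE sumr_ge0 // => j _; rewrite exprn_ge0. Qed.

Lemma mxtrace_diag_real_congr n k (Y : 'M[C]_(n, k)) (g : 'I_n -> R) :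
  \tr (Y ^t* *m diag_mx (\row_i (g i)%:C) *m Y) =
  (\sum_i g i * row_sqnorm Y i)%:C.
Proof.
rewrite mxtrace_diag_congr rmorph_sum; apply: eq_bigr => i _.
by rewrite mxE row_sqnormE rmorphM.
Qed.

Lemma hermitian_spectralE n (M : 'M[C]_n) : M \is hermsymmx ->
  M = (spectralmx M) ^t* *m diag_mx (spectral_diag M) *m spectralmx M.
Proof.
move=> /hermitian_normalmx /orthomx_spectralP {1}->.
by rewrite invmx_unitary // spectral_unitarymx.
Qed.

Lemma spectral_diag_form n (M : 'M[C]_n) i : M \is hermsymmx ->
  spectral_diag M 0 i =
  let v := ('e_i : 'rV[C]_n) *m spectralmx M in (v *m M *m v ^t*) 0 0.
Proof.
move=> hM /=; have PU := spectral_unitarymx M; have ME := hermitian_spectralE hM.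
set P := spectralmx M in PU ME *.
rewrite [in RHS]ME trmxC_mul !mulmxA !mulmxtVK //.
rewrite diag_form (bigD1 i) //= big1 => [|j ji].
  by rewrite !mxE !eqxx normr1 expr1n mulr1 addr0.
by rewrite !mxE eqxx (negPf ji) normr0 expr0n mulr0.
Qed.

Lemma spectral_row_neq0 n (M : 'M[C]_n) i :
  ('e_i : 'rV[C]_n) *m spectralmx M != 0.
Proof.
apply/negP => /eqP ePM.
have : ('e_i : 'rV[C]_n) *m spectralmx M *m (spectralmx M) ^t* = 'e_i.
  by rewrite mulmxtVK // spectral_unitarymx.
rewrite ePM mul0mx => /matrixP /(_ 0 i); rewrite !mxE !eqxx /= => /eqP.
by rewrite eq_sym oner_eq0.
Qed.

Lemma spectral_diag_ge0 n (M : 'M[C]_n) i : M \is hermsymmx ->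
  (forall v : 'rV[C]_n, 0 <= (v *m M *m v ^t*) 0 0) -> 0 <= spectral_diag M 0 i.
Proof. by move=> hM M0; rewrite spectral_diag_form. Qed.

Lemma posdef_spectral_diag_gt0 n (M : 'M[C]_n) i :
  posdef M -> 0 < spectral_diag M 0 i.
Proof.
by move=> [hM M0]; rewrite spectral_diag_form // M0 // spectral_row_neq0.
Qed.

Lemma diag_real_trmxC n (g : 'I_n -> R) :
  (diag_mx (\row_i (g i)%:C)) ^t* = diag_mx (\row_i (g i)%:C).
Proof.
apply/matrixP => i j; rewrite !mxE.
have [<-|_] := eqVneq i j; last by rewrite !mulr0n conjC0.
by rewrite !mulr1n conj_Creal // complex_real.
Qed.

Lemma mxpowE n (M : 'M[C]_n) s : mxpow M s =
  (spectralmx M) ^t* *m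
  diag_mx (\row_i (powR (complex.Re (spectral_diag M 0 i)) s)%:C)
  *m spectralmx M.
Proof. by rewrite /mxpow invmx_unitary // spectral_unitarymx. Qed.

Lemma mxpow_trmxC n (M : 'M[C]_n) s : (mxpow M s) ^t* = mxpow M s.
Proof. by rewrite mxpowE !trmxC_mul trmxCK diag_real_trmxC mulmxA. Qed.

Lemma mxpowD n (M : 'M[C]_n) s u :
  (forall i, 0 < complex.Re (spectral_diag M 0 i)) ->
  mxpow M s *m mxpow M u = mxpow M (s + u).
Proof.
move=> M0; rewrite !mxpowE; have PU := spectral_unitarymx M.
set P := spectralmx M in PU *.
set f := \row_i _; set g := \row_i _; set h := \row_i _.
have fgh : \row_j (f 0 j * g 0 j) = h.
  apply/matrixP => i j; rewrite !mxE -rmorphM powRD //.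
  by apply/implyP => _; rewrite lt0r_neq0.
clearbody P f g h.
by rewrite !mulmxA (mulmxtVK _ PU) -(mulmxA (P ^t*) (diag_mx f)) mulmx_diag fgh.
Qed.

Lemma mxpow0 n (M : 'M[C]_n) : mxpow M 0 = 1%:M.
Proof.
rewrite mxpowE.
have -> : \row_i (powR (complex.Re (spectral_diag M 0 i)) 0)%:C = const_mx 1.
  by apply/matrixP => i j; rewrite !mxE powRr0.
rewrite diag_const_mx mulmx1 -invmx_unitary ?spectral_unitarymx //.
by rewrite mulVmx // spectral_unit.
Qed.

Lemma mxpow1 n (M : 'M[C]_n) :
  M \is hermsymmx -> (forall i, 0 <= spectral_diag M 0 i) -> mxpow M 1 = M.
Proof.
move=> hM M0; rewrite mxpowE.
suff -> : \row_i (powR (complex.Re (spectral_diag M 0 i)) 1)%:C = spectral_diag M.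
  by rewrite -hermitian_spectralE.
apply/matrixP => i j; rewrite !mxE ord1 powRr1; first by rewrite -ge0_RRe.
by move: (M0 j); rewrite lecE => /andP[].
Qed.

Lemma posdef_mxpowD n (A : 'M[C]_n) s u :
  posdef A -> mxpow A s *m mxpow A u = mxpow A (s + u).
Proof.
move=> pA; apply: mxpowD => i.
by have := posdef_spectral_diag_gt0 i pA; rewrite ltcE => /andP[].
Qed.

Lemma posdef_mxpow1 n (A : 'M[C]_n) : posdef A -> mxpow A 1 = A.
Proof.
move=> pA; have [hA _] := pA.
by apply: mxpow1 => // i; rewrite ltW // posdef_spectral_diag_gt0.
Qed.

Lemma mxtrace_mxpow_holder n k (M : 'M[C]_n) (Y : 'M[C]_(n, k)) t :
  M \is hermsymmx -> (forall v : 'rV[C]_n, 0 <= (v *m M *m v ^t*) 0 0) ->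
  0 <= t <= 1 ->
  \tr (Y ^t* *m mxpow M t *m Y)
    <= (powR (complex.Re (\tr (Y ^t* *m Y))) (1 - t)
        * powR (complex.Re (\tr (Y ^t* *m M *m Y))) t)%:C.
Proof.
move=> hM M0 t01; have ME := hermitian_spectralE hM.
set P := spectralmx M in ME *.
set l := fun i => complex.Re (spectral_diag M 0 i).
have l0 i : 0 <= l i by move: (spectral_diag_ge0 i hM M0); rewrite lecE => /andP[].
have DE : spectral_diag M = \row_i (l i)%:C.
  by apply/matrixP => i j; rewrite ord1 mxE -ge0_RRe // spectral_diag_ge0.
set w := row_sqnorm (P *m Y).
have trE (g : 'I_n -> R) :
    \tr (Y ^t* *m (P ^t* *m diag_mx (\row_i (g i)%:C) *m P) *m Y) =
    (\sum_i g i * w i)%:C.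
  by rewrite -mxtrace_diag_real_congr trmxC_mul !mulmxA.
have trMt : \tr (Y ^t* *m mxpow M t *m Y) = (\sum_i powR (l i) t * w i)%:C.
  by rewrite mxpowE trE.
have trY : \tr (Y ^t* *m Y) = (\sum_i w i)%:C.
  rewrite -[X in \tr (X *m Y)]mulmx1 -(mxpow0 M) mxpowE trE.
  by congr (_%:C); apply: eq_bigr => i _; rewrite powRr0 mul1r.
have trYM : \tr (Y ^t* *m M *m Y) = (\sum_i l i * w i)%:C.
  by rewrite {1}ME DE trE.
rewrite trMt trY trYM /= lecR.
by apply: sum_powR_holder => // i; apply: row_sqnorm_ge0.
Qed.

End Matrices.

Local Open Scope sesquilinear_scope.
Unset Implicit Arguments.

Theorem corollary5 (R : realType) (d k : nat) (A B : 'M[R[i]]_d)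
    (X : 'M[R[i]]_(d, k)) (t : R) :
  posdef A -> posdef B -> \rank X = k ->
  0 <= t <= 1 ->
  \tr (adjmx X *m geomean A B t *m X)
    <= ((powR (complex.Re (\tr (adjmx X *m A *m X))) (1 - t))
        * (powR (complex.Re (\tr (adjmx X *m B *m X))) t))%:C.
Proof.
move=> pA pB _ t01; have [hB _] := pB; rewrite /geomean.
set G := mxpow A (1/2); set N := mxpow A (-(1/2)).
have GG : G *m G = A by rewrite posdef_mxpowD // -splitr posdef_mxpow1.
have GN : G *m N = 1%:M by rewrite posdef_mxpowD // subrr mxpow0.
have NG : N *m G = 1%:M by rewrite posdef_mxpowD // addNr mxpow0.
have hG : G ^t* = G := mxpow_trmxC A _.
have hN : N ^t* = N := mxpow_trmxC A _.
clearbody G N.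
have BE : B = G *m (N *m B *m N) *m G.
  by rewrite !mulmxA GN mul1mx -mulmxA NG mulmx1.
have XAX : adjmx X *m A *m X = (G *m X) ^t* *m (G *m X).
  by rewrite -[A]GG trmxC_mul hG !mulmxA.
have XBX : adjmx X *m B *m X =
    (G *m X) ^t* *m (N *m B *m N ^t*) *m (G *m X).
  by rewrite {1}BE trmxC_mul hG hN !mulmxA.
have XCX : adjmx X *m (G *m mxpow (N *m B *m N) t *m G) *m X =
    (G *m X) ^t* *m mxpow (N *m B *m N ^t*) t *m (G *m X).
  by rewrite trmxC_mul hG hN !mulmxA.
rewrite XCX XAX XBX.
apply: mxtrace_mxpow_holder t01; first exact: hermitian_congr.
by move=> v; apply: posdef_congr_ge0.
Qed.
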